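(* Let $(X,d)$ be a metric space and $T:X\to X$ a mapping for which there is $\lambda\in[0,1)$ with $d(Tx,Ty)\le\lambda\,d(x,y)$ for all $x,y\in X$. Then there exist an integer $p\ge 1$ and a constant $\alpha\in[0,\tfrac12)$ such that \[ d(T^p x,T^p y)\le \alpha\big(d(x,T^p y)+d(y,T^p x)\big)\quad\text{for all } x,y\in X. \]
   Context: $T^p$ denotes the $p$-fold composition of $T$ with itself. *)

From Stdlib Require Import Reals.
Open Scope R_scope.

Definition is_metric {X : Type} (d : X -> X -> R) : Prop :=
  (forall x y, 0 <= d x y) /\
  (forall x y, d x y = 0 <-> x = y) /\
  (forall x y, d x y = d y x) /\
  (forall x y z, d x z <= d x y + d y z).

Definition iterT {X : Type} (p : nat) (T : X -> X) : X -> X :=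
  fun x => Nat.iter p T x.

(* A contraction with constant [L < 1/3] is a Kannan map with constant
   [L / (1 - L) < 1/2]: put [d(Sx, Sy)] into the triangle inequality
   [d(x,y) <= d(x,Sy) + d(Sy,Sx) + d(Sx,y)] and absorb it on the left.
   Since [T^p] is a contraction with constant [lam^p], and [lam^p < 1/3]
   for [p] large, some iterate of [T] is a Kannan map. *)

From Stdlib Require Import Reals Lra Lia.
Open Scope R_scope.

Section Contractions.

Variables (X : Type) (d : X -> X -> R).
Hypothesis hd : is_metric d.

Lemma iterT_contraction (T : X -> X) (lam : R) :
  0 <= lam -> (forall x y, d (T x) (T y) <= lam * d x y) ->
  forall n x y, d (iterT n T x) (iterT n T y) <= lam ^ n * d x y.
Proof.
  intros lam_ge0 hT; unfold iterT.
  induction n as [|n IHn]; intros x y; simpl.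
  - lra.
  - eapply Rle_trans; [apply hT|].
    rewrite Rmult_assoc; apply Rmult_le_compat_l; [exact lam_ge0|apply IHn].
Qed.

Lemma contraction_kannan (S : X -> X) (L : R) :
  0 <= L < 1 -> (forall x y, d (S x) (S y) <= L * d x y) ->
  forall x y, d (S x) (S y) <= L / (1 - L) * (d x (S y) + d y (S x)).
Proof.
  destruct hd as [d_ge0 [_ [d_sym d_tri]]].
  intros [L_ge0 L_lt1] hS x y.
  assert (tri : d x y <= d x (S y) + d (S x) (S y) + d y (S x)).
  { rewrite (d_sym (S x) (S y)), (d_sym y (S x)).
    pose proof (d_tri x (S y) y); pose proof (d_tri (S y) (S x) y); lra. }
  assert (absorbed : (1 - L) * d (S x) (S y) <= L * (d x (S y) + d y (S x))).
  { pose proof (hS x y); pose proof (d_ge0 (S x) (S y)); nra. }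
  apply (Rmult_le_reg_l (1 - L)); [lra|].
  replace ((1 - L) * (L / (1 - L) * (d x (S y) + d y (S x))))
    with (L * (d x (S y) + d y (S x))) by (field; lra).
  exact absorbed.
Qed.

End Contractions.

Lemma pow_lt_third (lam : R) :
  0 <= lam < 1 -> exists p : nat, (1 <= p)%nat /\ lam ^ p < 1/3.
Proof.
  intros [lam_ge0 lam_lt1].
  destruct (pow_lt_1_zero lam ltac:(rewrite Rabs_right; lra) (1/3))
    as [N HN]; [lra|].
  exists (S N); split; [lia|].
  specialize (HN (S N) ltac:(lia)).
  rewrite Rabs_right in HN; [exact HN|apply Rle_ge, pow_le, lam_ge0].
Qed.

Lemma kannan_constant_bounds (L : R) :
  0 <= L < 1/3 -> 0 <= L / (1 - L) < 1/2.
Proof.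
  intros [L_ge0 L_lt].
  split.
  - apply Rmult_le_pos; [lra|apply Rlt_le, Rinv_0_lt_compat; lra].
  - apply (Rmult_lt_reg_r (1 - L)); [lra|].
    unfold Rdiv; rewrite Rmult_assoc, Rinv_l by lra; lra.
Qed.

Theorem mainTheorem3 (X : Type) (d : X -> X -> R) (T : X -> X)
  (hd : is_metric d)
  (hT : exists lam : R, 0 <= lam < 1 /\
          forall x y : X, d (T x) (T y) <= lam * d x y) :
  exists (p : nat) (alpha : R), (1 <= p)%nat /\ 0 <= alpha < 1/2 /\
    forall x y : X,
      d (iterT p T x) (iterT p T y)
        <= alpha * (d x (iterT p T y) + d y (iterT p T x)).
Proof.
  destruct hT as [lam [lam_bounds hT]].
  destruct (pow_lt_third lam lam_bounds) as [p [p_ge1 small]].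
  assert (L_ge0 : 0 <= lam ^ p) by (apply pow_le; lra).
  exists p, (lam ^ p / (1 - lam ^ p)).
  split; [exact p_ge1|split].
  - apply kannan_constant_bounds; lra.
  - apply contraction_kannan; [exact hd|lra|].
    apply iterT_contraction; [lra|exact hT].
Qed.
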